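(* For all $n\ge1$, $$a_{\{0101,0102,0120,0121\}}(n)=a_{\{0102,0112,0120,0121\}}(n)=2^{n-1}+\binom{n-1}{2}.$$
   Context: An ascent in an integer sequence $s_1\cdots s_m$ is an index $j$ with $s_j<s_{j+1}$; $\mathrm{asc}$ denotes the number of ascents. An ascent sequence is a sequence $x_1\cdots x_n$ of nonnegative integers with $x_1=0$ and $x_i\le 1+\mathrm{asc}(x_1\cdots x_{i-1})$ for all $i\ge2$. The reduction $\mathrm{red}(w)$ of an integer sequence $w$ replaces the $i$-th smallest distinct letter of $w$ by $i-1$; a pattern is a reduced sequence. A sequence $x$ contains a pattern $p=p_1\cdots p_k$ if there are indices $i_1<\cdots<i_k$ with $\mathrm{red}(x_{i_1}\cdots x_{i_k})=p$; otherwise $x$ avoids $p$. For a finite set $P$ of patterns, $a_P(n)$ denotes the number of ascent sequences of length $n$ avoiding every pattern in $P$. *)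

From mathcomp Require Import all_boot.
Set Implicit Arguments. Unset Strict Implicit. Unset Printing Implicit Defensive.

Fixpoint asc (s : seq nat) : nat :=
  match s with
  | a :: ((b :: _) as t) => (a < b) + asc t
  | _ => 0
  end.

Definition is_ascent_seq (x : seq nat) : bool :=
  (head 0 x == 0) &&
  [forall i : 'I_(size x), (0 < i) ==> (nth 0 x i <= (asc (take i x)).+1)].

Definition red (w : seq nat) : seq nat :=
  [seq size (undup [seq y <- w | y < v]) | v <- w].

Definition contains (x p : seq nat) : bool :=
  [exists m : (size x).-tuple bool, red (mask m x) == p].

Definition avoids_all (P : seq (seq nat)) (x : seq nat) : bool :=
  all (fun p => ~~ contains x p) P.

(* a_P(n): number of ascent sequences of length n avoiding every pattern of P.
   Entries of an ascent sequence of length n are < n, so they are enumerated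
   as n-tuples over 'I_n. *)
Definition aP (P : seq (seq nat)) (n : nat) : nat :=
  #|[set t : n.-tuple 'I_n |
      is_ascent_seq (map val t) &
      avoids_all P (map val t) ]|.

(* Build an avoiding ascent sequence one letter at a time.

   For {0101, 0102, 0120, 0121}: a "stair" (0 followed by steps of +0 or +1)
   has as many ascents as its last letter m, so the next letter is at most
   m + 1.  A drop to 0 < v < m creates 0 v m v and a drop to 0 from m >= 2
   creates 0 1 m 0, so the only way to leave the stairs is 0^a 1^b 0, after
   which only zeros may follow (1 would create 0101, 2 would create 0102).

   For {0102, 0112, 0120, 0121}: a binary sequence starting with 0 can only
   leave {0, 1} through 0^a 1 2 (otherwise 0102 or 0112 appears), and from
   there on it must climb by one or repeat its maximum, giving the ramps
   0^a 1 2 .. k k^b.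

   Stairs and binary sequences starting with 0 of length n number 2^(n-1);
   the other shapes are determined by three positive part lengths summing to
   n, so there are C(n-1, 2) of them. *)

From mathcomp Require Import all_boot zify.
Set Implicit Arguments. Unset Strict Implicit. Unset Printing Implicit Defensive.

Lemma last_nseq (T : Type) (x : T) n : last x (nseq n x) = x.
Proof. by elim: n. Qed.

Lemma rcons_nseq (T : Type) (x : T) n : rcons (nseq n x) x = nseq n.+1 x.
Proof. by elim: n => //= n ->. Qed.

Lemma iotaSr m n : iota m n.+1 = rcons (iota m n) (m + n).
Proof. by rewrite -addn1 iotaD cats1. Qed.

Lemma last_iota m n : last m (iota m.+1 n) = m + n.
Proof. by elim: n m => [|n IH] m /=; rewrite ?addn0 // IH addnS. Qed.

Lemma rcons_subseq (T : eqType) (s y : seq T) v :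
  subseq s y -> subseq (rcons s v) (rcons y v).
Proof. by move=> sy; rewrite -!cats1 cat_subseq. Qed.

Lemma subseq_skip_nseq (u v : nat) t n r : u != v ->
  subseq (u :: t) (nseq n v ++ r) = subseq (u :: t) r.
Proof. by move=> uv; elim: n => //= n IH; rewrite (negbTE uv). Qed.

Lemma mem_map_cons (a e : nat) y (L : seq (seq nat)) :
  (e :: y \in map (cons a) L) = (e == a) && (y \in L).
Proof.
apply/mapP/andP => [[z zL [-> ->]]|[/eqP-> yL]]; last by exists y.
by rewrite eqxx.
Qed.

Lemma path_leq_last a s z : path leq a s -> z \in a :: s -> z <= last a s.
Proof.
elim: s a z => [|b s IH] a z /=; first by rewrite inE => _ /eqP->.
move=> /andP[ab bs]; rewrite inE => /predU1P[->|]; last exact: IH.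
exact: leq_trans ab (IH b b bs (mem_head _ _)).
Qed.

Lemma sorted_ltn_subseq t s : sorted ltn t -> sorted ltn s -> {subset t <= s} ->
  subseq t s.
Proof.
move=> tsorted ssorted ts.
have -> : t = [seq y <- s | y \in t]; last exact: filter_subseq.
apply: (irr_sorted_eq ltn_trans ltnn) => //; first exact: (sorted_filter ltn_trans).
by move=> y; rewrite mem_filter; case: (boolP (y \in t)) => // /ts->.
Qed.

Lemma binary_no_descent s : all (leq^~ 1) s -> ~~ subseq [:: 1; 0] s ->
  exists a b, s = nseq a 0 ++ nseq b 1.
Proof.
elim: s => [|[|[|e]] s IH] //=; first by exists 0, 0.
  by move=> sbin /(IH sbin)[a [b ->]]; exists a.+1, b.
move=> /allP sbin; rewrite sub1seq => s0; exists 0, (size s).+1; congr (_ :: _).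
apply/all_pred1P/allP => -[|[|z]] zs //=; first by rewrite zs in s0.
by have := sbin _ zs.
Qed.

(** * Reduction and pattern containment *)

Definition letter_rank (w : seq nat) (v : nat) := size (undup [seq y <- w | y < v]).

Lemma redE w : red w = map (letter_rank w) w.
Proof. by []. Qed.

Lemma letter_rank_mono w : {homo letter_rank w : v u / v <= u}.
Proof.
move=> v u vu; apply: uniq_leq_size; first exact: undup_uniq.
by move=> y; rewrite !mem_undup !mem_filter => /andP[yv ->]; rewrite (leq_trans yv).
Qed.

Lemma letter_rank_lt w v u : v \in w -> v < u -> letter_rank w v < letter_rank w u.
Proof.
move=> vw vu; rewrite -[_.+1]/(size (v :: _)).
apply: uniq_leq_size => [|y]; first by rewrite /= undup_uniq mem_undup mem_filter ltnn.
rewrite inE !mem_undup !mem_filter => /predU1P[->|/andP[yv ->]].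
  by rewrite vu.
by rewrite (ltn_trans yv).
Qed.

Lemma letter_rank_size w (v : nat) : v \in w -> letter_rank w v < size (undup w).
Proof.
move=> vw; rewrite -[_.+1]/(size (v :: _)).
apply: uniq_leq_size => [|y]; first by rewrite /= undup_uniq mem_undup mem_filter ltnn.
by rewrite in_cons !mem_undup mem_filter => /predU1P[->|/andP[]].
Qed.

Lemma letter_rank_leE w : {in w &, {mono letter_rank w : v u / v <= u}}.
Proof. by apply: leq_mono_in => v u vw _; apply: letter_rank_lt. Qed.

Lemma letter_rank_ltE w : {in w &, {mono letter_rank w : v u / v < u}}.
Proof. exact/leqW_mono_in/letter_rank_leE. Qed.

Lemma red_map (f : nat -> nat) s :
  {in s &, {homo f : x y / x < y}} -> red (map f s) = red s.
Proof.
move=> /leq_mono_in fle; have flt := leqW_mono_in fle.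
rewrite !redE -map_comp; apply/eq_in_map => v vs /=.
rewrite /letter_rank filter_map.
rewrite (eq_in_filter (a2 := fun y => y < v)) => [|y ys]; last exact: flt.
set t := [seq y <- s | y < v].
have ts : {subset undup t <= s} by move=> y; rewrite mem_undup mem_filter => /andP[].
rewrite -[RHS](size_map f); apply/perm_size/uniq_perm; first exact: undup_uniq.
  by rewrite (map_inj_in_uniq (sub_in2 ts (incn_inj_in fle))) undup_uniq.
move=> y; rewrite mem_undup.
by apply/mapP/mapP => -[z zt ->]; exists z; rewrite ?mem_undup in zt *.
Qed.

Lemma red_ltE s i j : i < size s -> j < size s ->
  (nth 0 (red s) i < nth 0 (red s) j) = (nth 0 s i < nth 0 s j).
Proof. by move=> si sj; rewrite redE !(nth_map 0) // letter_rank_ltE ?mem_nth. Qed.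

Lemma containsP x p : reflect (exists2 s, subseq s x & red s = p) (contains x p).
Proof.
apply: (iffP existsP) => [[m /eqP <-]|[s /subseqP[m sm ->] <-]].
  by exists (mask m x); first exact: mask_subseq.
by exists (Tuple (introT eqP sm)).
Qed.

Lemma contains4P x p : contains x p -> size p = 4 ->
  exists s0 s1 s2 s3, subseq [:: s0; s1; s2; s3] x /\
    forall i j, i < 4 -> j < 4 ->
      (nth 0 [:: s0; s1; s2; s3] i < nth 0 [:: s0; s1; s2; s3] j) =
      (nth 0 p i < nth 0 p j).
Proof.
move=> /containsP[s ssub sred] psize.
have ssize : size s = 4 by rewrite -psize -sred size_map.
case: s ssize ssub sred => [|s0 [|s1 [|s2 [|s3 []]]]] // _ ssub sred.
by exists s0, s1, s2, s3; split=> // i j i4 j4; rewrite -sred red_ltE.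
Qed.

Lemma contains_subseq x y p : subseq x y -> contains x p -> contains y p.
Proof.
move=> xy /containsP[s sx <-]; apply/containsP.
by exists s; first exact: subseq_trans xy.
Qed.

Lemma contains_sorted x p : sorted leq x -> contains x p -> sorted leq p.
Proof.
move=> xsorted /containsP[s sx <-]; rewrite redE.
apply: homo_sorted_in (subseq_sorted leq_trans sx xsorted) => //.
by move=> v u _ _; apply: letter_rank_mono.
Qed.

Lemma contains_binary x p : all (leq^~ 1) x -> contains x p -> all (leq^~ 1) p.
Proof.
move=> /allP xbin /containsP[s sx <-]; rewrite redE all_map; apply/allP => v vs /=.
suff : size (undup s) <= 2 by move/(leq_trans (letter_rank_size vs)).
apply: (@uniq_leq_size _ _ [:: 0; 1]); first exact: undup_uniq.
move=> y; rewrite mem_undup => /(mem_subseq sx)/xbin.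
by case: y => [|[|]].
Qed.

Lemma contains_nth_map t p x : sorted ltn t -> all (gtn (size t)) p ->
  subseq (map (nth 0 t) p) x -> contains x (red p).
Proof.
move=> tsorted /allP pt sx; apply/containsP; exists (map (nth 0 t) p) => //.
apply: red_map => i j /pt ip /pt jp.
exact: (sorted_ltn_nth ltn_trans 0 tsorted).
Qed.

Lemma avoids_all4 p0 p1 p2 p3 x : avoids_all [:: p0; p1; p2; p3] x =
  [&& ~~ contains x p0, ~~ contains x p1, ~~ contains x p2 & ~~ contains x p3].
Proof. by rewrite /avoids_all /= andbT. Qed.

Lemma avoids_all_rcons P y v : avoids_all P (rcons y v) -> avoids_all P y.
Proof.
apply: sub_all => p; apply: contra; apply: contains_subseq.
exact: subseq_rcons.
Qed.

(** * Ascent sequences *)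

Lemma ascent_seqE x : is_ascent_seq x =
  (head 0 x == 0) && all (fun i => (0 < i) ==> (nth 0 x i <= (asc (take i x)).+1))
                         (iota 0 (size x)).
Proof.
congr (_ && _); apply/forallP/allP => [ok i|ok i]; last by apply: ok; rewrite mem_iota /=.
by rewrite mem_iota => /= ix; apply: (ok (Ordinal ix)).
Qed.

Lemma ascent_seq1 v : is_ascent_seq [:: v] = (v == 0).
Proof. by rewrite ascent_seqE andbT. Qed.

Lemma ascent_seq_rcons y v : y != [::] ->
  is_ascent_seq (rcons y v) = is_ascent_seq y && (v <= (asc y).+1).
Proof.
move=> y0; rewrite !ascent_seqE size_rcons -(addn1 (size y)) iotaD all_cat /= andbT.
rewrite -andbA; congr [&& _, _ & _]; first by case: y y0.
  apply: eq_in_all => i; rewrite mem_iota /= => ilt.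
  by rewrite -cats1 nth_cat ilt takel_cat // ltnW.
by rewrite add0n lt0n size_eq0 y0 -cats1 nth_cat ltnn subnn take_size_cat.
Qed.

Lemma asc_cons2 a b s : asc [:: a, b & s] = (a < b) + asc (b :: s).
Proof. by []. Qed.

Lemma asc_lt_size x : x != [::] -> asc x < size x.
Proof.
elim: x => [|a [|b x] IH] //= _.
by have := IH isT; case: (a < b) => /=; lia.
Qed.

Lemma ascent_seq_bounded x : is_ascent_seq x -> all (gtn (size x)) x.
Proof.
elim/last_ind: x => [|y v IH] //.
have [->|y0] := eqVneq y [::]; first by rewrite ascent_seq1 => /eqP->.
rewrite ascent_seq_rcons // all_rcons size_rcons => /andP[/IH yb vle].
rewrite /= (leq_ltn_trans vle) ?ltnS ?asc_lt_size //=.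
by apply: sub_all yb => z /= /ltnW.
Qed.

Lemma asc_cat s t : s != [::] -> asc (s ++ t) = asc s + asc (last 0 s :: t).
Proof.
case: s => // a s _ /=; elim: s a => [|b s IH] a /=; first by case: t.
by rewrite IH addnA.
Qed.

Lemma asc_nseq n k : asc (nseq n k) = 0.
Proof. by elim: n => [|[|n] IH] //=; rewrite ltnn. Qed.

(* [head 1] makes the empty sequence fail the test. *)
Definition binary0 x := (head 1 x == 0) && all (leq^~ 1) x.

Lemma binary0_ascent x : binary0 x -> is_ascent_seq x.
Proof.
elim/last_ind: x => [|y v IH] //.
have [->|y0] := eqVneq y [::]; first by rewrite ascent_seq1 /binary0 /= andbT => /andP[].
have headE : head 1 (rcons y v) = head 1 y by case: y {IH} y0.
rewrite /binary0 headE all_rcons ascent_seq_rcons // => /and3P[h0 v1 ybin].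
by rewrite IH /binary0 ?h0 ?ybin // (leq_trans v1).
Qed.

(** * Stairs *)

Definition unit_step (u w : nat) := w \in [:: u; u.+1].

Definition stair (x : seq nat) :=
  if x is a :: s then (a == 0) && path unit_step a s else false.

Lemma unit_step_leq : subrel unit_step leq.
Proof. by move=> u w; rewrite /unit_step !inE => /predU1P[->|/eqP->]. Qed.

Lemma stair_sorted x : stair x -> sorted leq x.
Proof. by case: x => //= a s /andP[_ /(sub_path unit_step_leq)]. Qed.

Lemma stair_le_last x z : stair x -> z \in x -> z <= last 0 x.
Proof.
case: x => //= a s /andP[/eqP-> /(sub_path unit_step_leq)].
exact: path_leq_last.
Qed.

Lemma path_unit_step_asc u s : path unit_step u s -> asc (u :: s) + u = last u s.
Proof.
elim: s u => [|b s IH] u // /andP[ub bs].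
rewrite -[last u _]/(last b s) -(IH b bs) asc_cons2.
by move: ub; rewrite /unit_step !inE => /predU1P[->|/eqP->]; rewrite ?ltnn ?ltnSn; lia.
Qed.

Lemma stair_asc x : stair x -> asc x = last 0 x.
Proof. by case: x => // a s /andP[/eqP-> /path_unit_step_asc]; rewrite addn0. Qed.

Lemma path_unit_step_mem u s z : path unit_step u s -> u <= z <= last u s ->
  z \in u :: s.
Proof.
elim: s u => [|b s IH] u /=; first by rewrite inE eq_sym eqn_leq.
case/andP => ub bs /andP[uz zl]; rewrite in_cons.
have [//|zu] := eqVneq z u; apply: IH bs _; rewrite zl andbT.
by move: ub; rewrite /unit_step !inE => /predU1P[->//|/eqP->]; lia.
Qed.

Lemma stair_mem x z : stair x -> z <= last 0 x -> z \in x.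
Proof. by case: x => // a s /andP[/eqP-> /path_unit_step_mem]; apply. Qed.

Lemma stair_subseq x t : stair x -> sorted ltn t -> all (leq^~ (last 0 x)) t ->
  subseq t x.
Proof.
move=> xstair tsorted /allP tle; apply: subseq_trans (undup_subseq x).
apply: sorted_ltn_subseq => //.
  by rewrite ltn_sorted_uniq_leq undup_uniq (undup_sorted leq_trans) ?stair_sorted.
by move=> z /tle /(stair_mem xstair); rewrite mem_undup.
Qed.

Lemma stair_rcons y v : y != [::] ->
  stair (rcons y v) = stair y && unit_step (last 0 y) v.
Proof. by case: y => //= a s _; rewrite rcons_path andbA. Qed.

Lemma stair_ascent x : stair x -> is_ascent_seq x.
Proof.
elim/last_ind: x => [|y v IH] //.
have [->|y0] := eqVneq y [::]; first by rewrite ascent_seq1 /= andbT.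
rewrite stair_rcons // ascent_seq_rcons // => /andP[ystair yv].
rewrite IH // stair_asc //=.
by move: yv; rewrite /unit_step !inE => /predU1P[->|/eqP->].
Qed.

Lemma path_unit_step_nseq u n : path unit_step u (nseq n u).
Proof. by elim: n => //= n ->; rewrite /unit_step mem_head. Qed.

Lemma path_unit_step_iota m n : path unit_step m (iota m.+1 n).
Proof. by elim: n m => //= n IH m; rewrite IH /unit_step !inE eqxx orbT. Qed.

Lemma stair_zeros_cat a s : stair (nseq a.+1 0 ++ s) = path unit_step 0 s.
Proof. by rewrite /= cat_path path_unit_step_nseq last_nseq. Qed.

Lemma stair_zeros_ones a b : stair (nseq a.+1 0 ++ nseq b 1).
Proof. by rewrite stair_zeros_cat; case: b => //= b; rewrite path_unit_step_nseq. Qed.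

Lemma stair_last1 y : stair y -> last 0 y = 1 ->
  exists a b, y = nseq a.+1 0 ++ nseq b.+1 1.
Proof.
move=> ystair ylast.
have ybin : all (leq^~ 1) y by apply/allP => z; rewrite -ylast; apply: stair_le_last.
have no10 : ~~ subseq [:: 1; 0] y.
  by apply/negP => /(subseq_sorted leq_trans)/(_ (stair_sorted ystair)).
have [[|a] [[|b] yE]] := binary_no_descent ybin no10; rewrite {}yE in ystair ylast *.
- by [].
- by [].
- by rewrite cats0 last_nseq in ylast.
by exists a, b.
Qed.

Lemma stair_rcons_drop y v : stair y -> v < last 0 y ->
  ~~ contains (rcons y v) [:: 0; 1; 2; 0] -> ~~ contains (rcons y v) [:: 0; 1; 2; 1] ->
  v = 0 /\ last 0 y = 1.
Proof.
move=> ystair vlt n0120 n0121; set m := last 0 y in vlt *.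
have [v0|vpos] := posnP v; last first.
  case/negP: n0121; apply: (@contains_nth_map [:: 0; v; m] [:: 0; 1; 2; 1]) => //=.
    by rewrite vpos vlt.
  rewrite -[[:: 0; v; m; v]]/(rcons [:: 0; v; m] v).
  apply/rcons_subseq/stair_subseq => //=; first by rewrite vpos vlt.
  by rewrite leqnn ltnW.
subst v; split=> //; apply/eqP; rewrite eqn_leq vlt andbT leqNgt.
apply: contra n0120 => m2; apply: (@contains_nth_map [:: 0; 1; m] [:: 0; 1; 2; 0]) => //=.
  by rewrite m2.
rewrite -[[:: 0; 1; m; 0]]/(rcons [:: 0; 1; m] 0).
apply/rcons_subseq/stair_subseq => //=; first by rewrite m2.
by rewrite leqnn ltnW.
Qed.

(** * Enumerations *)

Fixpoint walks (next : nat -> seq nat) (a m : nat) : seq (seq nat) :=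
  if m is m'.+1 then [seq b :: w | b <- next a, w <- walks next b m'] else [:: [::]].

Lemma mem_walks next a m y :
  (y \in walks next a m) = (size y == m) && path (fun u w => w \in next u) a y.
Proof.
elim: m a y => [|m IH] a [|b y] //=.
  by apply/negbTE/allpairsPdep => -[? [? []]].
rewrite eqSS; apply/allpairsPdep/and3P => [[c [w [cn wy [-> ->]]]]|[ym bn yp]].
  by move: wy; rewrite IH => /andP[].
by exists b, y; rewrite IH ym.
Qed.

Lemma uniq_walks next a m : (forall u, uniq (next u)) -> uniq (walks next a m).
Proof.
move=> nextu; elim: m a => [|m IH] a //=.
by apply: allpairs_uniq_dep => // -[b w] [b' w'] _ _ [-> /= ->].
Qed.

Lemma size_walks next k a m : (forall u, size (next u) = k) ->
  size (walks next a m) = k ^ m.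
Proof.
move=> nextk; elim: m a => [|m IH] a //=.
have sumn_const (s : seq nat) c : sumn [seq c | _ <- s] = size s * c.
  by elim: s => //= _ s ->.
by rewrite size_allpairs_dep (eq_map IH) sumn_const nextk expnS.
Qed.

Definition stairs n := map (cons 0) (walks (fun u => [:: u; u.+1]) 0 n.-1).

Lemma mem_stairs n x : 0 < n -> (x \in stairs n) = (size x == n) && stair x.
Proof.
case: n => // n _; case: x => [|a x]; first by apply/negbTE/mapP => -[].
by rewrite mem_map_cons mem_walks /= eqSS; case: eqP => [->|]; rewrite /= ?andbF.
Qed.

Lemma uniq_stairs n : uniq (stairs n).
Proof.
rewrite map_inj_uniq; last by move=> s t [].
by apply: uniq_walks => u; rewrite /= inE ltn_eqF.
Qed.

Lemma size_stairs n : size (stairs n) = 2 ^ n.-1.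
Proof. by rewrite size_map (size_walks (k := 2)). Qed.

Definition binaries n := map (cons 0) (walks (fun=> [:: 0; 1]) 0 n.-1).

Lemma mem_binaries n x : 0 < n -> (x \in binaries n) = (size x == n) && binary0 x.
Proof.
case: n => // n _; case: x => [|a x]; first by apply/negbTE/mapP => -[].
have pathE u : path (fun=> mem [:: 0; 1]) u x = all (leq^~ 1) x.
  by elim: x u => //= w x IH u; rewrite IH; case: w => [|[|]].
rewrite mem_map_cons mem_walks /= pathE eqSS /binary0 /=.
by case: eqP => [->|]; rewrite ?andbF.
Qed.

Lemma uniq_binaries n : uniq (binaries n).
Proof. by rewrite map_inj_uniq ?uniq_walks // => s t []. Qed.

Lemma size_binaries n : size (binaries n) = 2 ^ n.-1.
Proof. by rewrite size_map (size_walks (k := 2)). Qed.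

Definition triples m : seq (nat * nat * nat) :=
  [seq (a, b, m - a - b) | a <- iota 0 m.+1, b <- iota 0 (m - a).+1].

Lemma mem_triples m a b c : ((a, b, c) \in triples m) = (a + b + c == m).
Proof.
apply/allpairsPdep/eqP => [[a' [b' [+ + [-> -> ->]]]]|<-].
  by rewrite !mem_iota !add0n !ltnS => ha hb; rewrite -addnA !subnKC.
by exists a, b; rewrite !mem_iota !add0n !ltnS -!addnA !addKn !leq_addr.
Qed.

Lemma uniq_triples m : uniq (triples m).
Proof.
apply: allpairs_uniq_dep => [|a _|[a b] [a' b'] _ _ /= [-> ->]] //; exact: iota_uniq.
Qed.

Lemma size_triples m : size (triples m) = 'C(m.+2, 2).
Proof.
rewrite size_allpairs_dep; elim: m => // m IH.
rewrite -[iota 0 _]/(0 :: iota (1 + 0) m.+1) iotaDl map_cons -map_comp.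
rewrite (eq_map (g := fun a => size (iota 0 (m - a).+1))) // -cat1s sumn_cat IH.
by rewrite /= size_iota addn0 [in RHS]binS bin1 addnC.
Qed.

Definition shapes (f : nat -> nat -> nat -> seq nat) n :=
  if n is m.+3 then [seq f t.1.1 t.1.2 t.2 | t <- triples m] else [::].

Lemma size_shapes f n : size (shapes f n) = 'C(n.-1, 2).
Proof. by case: n => [|[|[|m]]] //; rewrite size_map size_triples. Qed.

Lemma uniq_shapes f n : injective (fun t : nat * nat * nat => f t.1.1 t.1.2 t.2) ->
  uniq (shapes f n).
Proof. by case: n => [|[|[|m]]] // finj; rewrite map_inj_uniq ?uniq_triples. Qed.

Lemma mem_shapes f n x : (forall a b c, size (f a b c) = (a + b + c).+3) ->
  x \in shapes f n <-> size x = n /\ exists a b c, x = f a b c.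
Proof.
rewrite /shapes => fsize; split.
  case: n => [|[|[|m]]] // /mapP[[[a b] c] + ->]; rewrite mem_triples fsize => /eqP->.
  by split; last by exists a, b, c.
case=> <- [a [b [c ->]]]; rewrite fsize; apply/mapP; exists (a, b, c) => //.
by rewrite mem_triples.
Qed.

Lemma aP_size P n L : uniq L ->
  (forall x, (x \in L) = [&& size x == n, is_ascent_seq x & avoids_all P x]) ->
  aP P n = size L.
Proof.
move=> Luniq Lmem; rewrite /aP cardE.
rewrite -[size (enum _)](size_map (fun t : n.-tuple 'I_n => map val t)).
have val_inj2 : injective (fun t : n.-tuple 'I_n => map val t).
  by move=> t1 t2 /(inj_map val_inj)/val_inj.
apply/perm_size/uniq_perm => //; first by rewrite map_inj_uniq ?enum_uniq.
move=> y; rewrite Lmem; apply/mapP/idP => [[t + ->]|/and3P[/eqP ysize yasc yavoid]].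
  by rewrite mem_enum inE size_map size_tuple eqxx.
have ybound := ascent_seq_bounded yasc; rewrite ysize in ybound.
have yE : map val (pmap insub y : seq 'I_n) = y.
  rewrite (pmap_filter (insubK _)); apply/all_filterP.
  by apply: sub_all ybound => z zn; rewrite insubT.
have tsize : size (pmap insub y : seq 'I_n) == n by rewrite -(size_map val) yE ysize.
by exists (Tuple tsize); rewrite // mem_enum inE /= yE yasc.
Qed.

Lemma aP_split P n L (S : pred (seq nat)) f : 0 < n -> uniq L ->
  (forall x, (x \in L) = (size x == n) && S x) ->
  (forall a b c, size (f a b c) = (a + b + c).+3) ->
  injective (fun t : nat * nat * nat => f t.1.1 t.1.2 t.2) ->
  (forall a b c, ~~ S (f a b c)) ->
  (forall x, x != [::] ->
     is_ascent_seq x && avoids_all P x <-> S x \/ exists a b c, x = f a b c) ->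
  aP P n = size L + 'C(n.-1, 2).
Proof.
move=> npos Luniq Lmem fsize finj notS avoidsP.
rewrite -(size_shapes f n) -size_cat; apply: aP_size.
  rewrite cat_uniq Luniq uniq_shapes // andbT.
  apply/hasPn => x /(mem_shapes _ _ fsize)[_ [a [b [c ->]]]].
  by rewrite Lmem (negbTE (notS a b c)) andbF.
move=> x; rewrite mem_cat Lmem; have [xn|xn] /= := eqVneq (size x) n; last first.
  by apply/negP => /(mem_shapes _ _ fsize)[xn' _]; rewrite xn' eqxx in xn.
have x0 : x != [::] by rewrite -size_eq0 xn -lt0n.
apply/orP/idP => [[Sx|/(mem_shapes _ _ fsize)[_ xf]]|/(avoidsP x x0)[Sx|xf]].
- by apply/(avoidsP x x0); left.
- by apply/(avoidsP x x0); right.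
- by left.
by right; apply/(mem_shapes _ _ fsize).
Qed.

(** * Avoiding 0101, 0102, 0120 and 0121 *)

Local Notation P1 :=
  [:: [:: 0; 1; 0; 1]; [:: 0; 1; 0; 2]; [:: 0; 1; 2; 0]; [:: 0; 1; 2; 1]].

Definition plateau a b c := nseq a.+1 0 ++ nseq b.+1 1 ++ nseq c.+1 0.

Lemma size_plateau a b c : size (plateau a b c) = (a + b + c).+3.
Proof. by rewrite !size_cat !size_nseq; lia. Qed.

Lemma plateau_inj : injective (fun t : nat * nat * nat => plateau t.1.1 t.1.2 t.2).
Proof.
move=> [[a b] c] [[a' b'] c'] /= e.
have := congr1 size e; have := congr1 (count_mem 1) e; have := congr1 (index 1) e.
rewrite !size_plateau /plateau !count_cat !count_nseq !index_cat !mem_nseq /= !size_nseq.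
by move=> ea eb ec; congr (_, _, _); lia.
Qed.

Lemma rcons_plateau a b c : rcons (plateau a b c) 0 = plateau a b c.+1.
Proof. by rewrite /plateau !rcons_cat rcons_nseq. Qed.

Lemma binary0_plateau a b c : binary0 (plateau a b c).
Proof. by rewrite /binary0 /plateau !all_cat !all_nseq. Qed.

Lemma subseq_010_plateau a b c : subseq [:: 0; 1; 0] (plateau a b c).
Proof.
rewrite -[[:: 0; 1; 0]]/([:: 0] ++ [:: 1] ++ [:: 0]).
by apply: cat_subseq; last apply: cat_subseq; rewrite sub1seq mem_nseq.
Qed.

Lemma plateau_no_101 a b c : ~~ subseq [:: 1; 0; 1] (plateau a b c).
Proof.
rewrite /plateau subseq_skip_nseq // -[nseq b.+1 1]/(1 :: nseq b 1) cat_cons.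
rewrite -[subseq _ (1 :: _)]/(subseq [:: 0; 1] _) subseq_skip_nseq //.
by rewrite /= sub1seq mem_nseq andbF.
Qed.

Lemma plateau_not_stair a b c : ~~ stair (plateau a b c).
Proof.
apply/negP => /stair_sorted.
by move/(subseq_sorted leq_trans (subseq_010_plateau a b c)).
Qed.

Lemma asc_plateau a b c : asc (plateau a b c) = 1.
Proof.
rewrite /plateau catA asc_cat // stair_asc ?stair_zeros_ones // last_cat last_nseq.
rewrite -[last 0 (nseq b.+1 1)]/(last 1 (nseq b 1)) last_nseq.
by rewrite -[asc (1 :: _)]/(asc (nseq c.+1 0)) asc_nseq.
Qed.

Lemma stair_avoids1 x : stair x -> avoids_all P1 x.
Proof.
move/stair_sorted => xsorted; rewrite avoids_all4.
by apply/and4P; split; apply/negP => /(contains_sorted xsorted).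
Qed.

(* In a binary sequence an occurrence of 0101 ends with the letters 1 0 1. *)
Lemma plateau_avoids1 a b c : avoids_all P1 (plateau a b c).
Proof.
have /andP[_ pbin] := binary0_plateau a b c.
rewrite avoids_all4; apply/and4P; split;
  try by apply/negP => /(contains_binary pbin).
apply/negP => /contains4P/(_ erefl)[s0 [s1 [s2 [s3 [ssub ltE]]]]].
have {}ssub : subseq [:: s1; s2; s3] (plateau a b c).
  exact: subseq_trans (subseq_cons _ s0) ssub.
have /allP sbin : all (leq^~ 1) [:: s1; s2; s3].
  by apply/allP => z /(mem_subseq ssub)/(allP pbin).
have sE : [:: s1; s2; s3] = [:: 1; 0; 1].
  have := sbin s1; have := sbin s3; rewrite !inE !eqxx !orbT => /(_ isT) ? /(_ isT) ?.
  have := ltE 2 1 isT isT; have := ltE 1 3 isT isT; have := ltE 3 1 isT isT.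
  by rewrite /= => *; congr [:: _; _; _]; lia.
by case/negP: (plateau_no_101 a b c); rewrite -sE.
Qed.

Lemma stair_rcons_avoid1 y v : stair y -> v <= (last 0 y).+1 ->
  avoids_all P1 (rcons y v) ->
  stair (rcons y v) \/ exists a b c, rcons y v = plateau a b c.
Proof.
move=> ystair; have y0 : y != [::] by case: y ystair.
move=> vle; rewrite avoids_all4 => /and4P[_ _ n0120 n0121].
case: (ltngtP v (last 0 y)) => [vlt|vgt|->].
- have [-> ylast] := stair_rcons_drop ystair vlt n0120 n0121.
  have [a [b ->]] := stair_last1 ystair ylast.
  by right; exists a, b, 0; rewrite -cats1 -catA.
- have -> : v = (last 0 y).+1 by apply/eqP; rewrite eqn_leq vle vgt.
  by left; rewrite stair_rcons // ystair /unit_step !inE eqxx orbT.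
by left; rewrite stair_rcons // ystair /unit_step mem_head.
Qed.

Lemma plateau_rcons_avoid1 a b c v : v <= 2 ->
  avoids_all P1 (rcons (plateau a b c) v) -> v = 0.
Proof.
rewrite avoids_all4 => v2 /and4P[n0101 n0102 _ _].
have sub010 v' : subseq [:: 0; 1; 0; v'] (rcons (plateau a b c) v').
  by rewrite -[[:: 0; 1; 0; v']]/(rcons [:: 0; 1; 0] v') rcons_subseq ?subseq_010_plateau.
case: v v2 n0101 n0102 => [|[|[|]]] // _.
  by case/negP; apply/containsP; exists [:: 0; 1; 0; 1].
by move=> _; case/negP; apply/containsP; exists [:: 0; 1; 0; 2].
Qed.

Lemma ascent_avoids1P x : x != [::] ->
  is_ascent_seq x && avoids_all P1 x <-> stair x \/ exists a b c, x = plateau a b c.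
Proof.
move=> x0; split => [/andP[]|[xstair|[a [b [c ->]]]]]; last first.
- by rewrite binary0_ascent ?binary0_plateau ?plateau_avoids1.
- by rewrite stair_ascent ?stair_avoids1.
elim/last_ind: x x0 => [|y v IH] // _.
have [->|y0] := eqVneq y [::]; first by rewrite ascent_seq1 => /eqP-> _; left.
rewrite ascent_seq_rcons // => /andP[yasc vle] vavoid.
case: (IH y0 yasc (avoids_all_rcons vavoid)) => [ystair|[a [b [c yE]]]].
  by apply: stair_rcons_avoid1; rewrite -?stair_asc.
rewrite yE asc_plateau in vle vavoid *; right; exists a, b, c.+1.
by rewrite (plateau_rcons_avoid1 vle vavoid) rcons_plateau.
Qed.

Lemma aP_P1 n : 0 < n -> aP P1 n = 2 ^ n.-1 + 'C(n.-1, 2).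
Proof.
move=> npos; rewrite -(size_stairs n).
exact: aP_split npos (uniq_stairs n) (fun x => mem_stairs x npos) size_plateau
  plateau_inj plateau_not_stair ascent_avoids1P.
Qed.

(** * Avoiding 0102, 0112, 0120 and 0121 *)

Local Notation P2 :=
  [:: [:: 0; 1; 0; 2]; [:: 0; 1; 1; 2]; [:: 0; 1; 2; 0]; [:: 0; 1; 2; 1]].

Definition ramp a k b := nseq a.+1 0 ++ iota 1 k.+2 ++ nseq b k.+2.

Lemma size_ramp a k b : size (ramp a k b) = (a + k + b).+3.
Proof. by rewrite !size_cat size_iota !size_nseq; lia. Qed.

Lemma stair_ramp a k b : stair (ramp a k b).
Proof.
rewrite stair_zeros_cat cat_path path_unit_step_iota.
by rewrite last_iota path_unit_step_nseq.
Qed.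

Lemma last_ramp a k b : last 0 (ramp a k b) = k.+2.
Proof. by rewrite !last_cat last_nseq last_iota last_nseq. Qed.

Lemma ramp_inj : injective (fun t : nat * nat * nat => ramp t.1.1 t.1.2 t.2).
Proof.
move=> [[a k] b] [[a' k'] b'] /= e.
have := congr1 size e; have := congr1 (count_mem 0) e; have := congr1 (last 0) e.
rewrite !size_ramp !last_ramp /ramp !count_cat !count_nseq !count_uniq_mem ?iota_uniq //.
by rewrite !mem_iota /= => -[ek] ea eb; congr (_, _, _); lia.
Qed.

Lemma ramp_not_binary0 a k b : ~~ binary0 (ramp a k b).
Proof.
apply/negP => /andP[_ /allP rbin].
by have := rbin k.+2; rewrite /ramp !mem_cat mem_iota add1n ltnSn orbT => /(_ isT).
Qed.

Lemma binary0_avoids2 x : binary0 x -> avoids_all P2 x.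
Proof.
case/andP => _ xbin; rewrite avoids_all4.
by apply/and4P; split; apply/negP => /(contains_binary xbin).
Qed.

(* The only letters repeated in a ramp are 0 and its maximum. *)
Lemma ramp_avoids2 a k b : avoids_all P2 (ramp a k b).
Proof.
have rsorted := stair_sorted (stair_ramp a k b).
rewrite avoids_all4; apply/and4P; split;
  try by apply/negP => /(contains_sorted rsorted).
apply/negP => /contains4P/(_ erefl)[s0 [s1 [s2 [s3 [ssub ltE]]]]].
have s3le : s3 <= k.+2.
  rewrite -(last_ramp a k b); apply: (stair_le_last (stair_ramp a k b)).
  by apply: (mem_subseq ssub); rewrite !inE eqxx !orbT.
have := leq_count_subseq (pred1 s1) ssub.
rewrite /ramp !count_cat !count_nseq (count_uniq_mem _ (iota_uniq 1 k.+2)) mem_iota.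
have := ltE 0 1 isT isT; have := ltE 1 3 isT isT.
have := ltE 1 2 isT isT; have := ltE 2 1 isT isT.
by rewrite /= => *; lia.
Qed.

Lemma binary0_rcons_avoid2 y v : binary0 y -> v <= (asc y).+1 ->
  avoids_all P2 (rcons y v) ->
  binary0 (rcons y v) \/ exists a k b, rcons y v = ramp a k b.
Proof.
case: y => [|e y] // /andP[e0 ybin] vle; have {}e0 : e = 0 := eqP e0; subst e.
rewrite avoids_all4 => /and4P[n0102 n0112 _ _].
have [v1|v2] := leqP v 1; first by left; move: ybin; rewrite /binary0 /= all_rcons v1.
right; have no10 : ~~ subseq [:: 1; 0] y.
  apply: contra n0102 => s10.
  apply: (@contains_nth_map [:: 0; 1; v] [:: 0; 1; 0; 2]) => //=; first by rewrite v2.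
  by rewrite -[[:: 1; 0; v]]/(rcons [:: 1; 0] v) rcons_subseq.
have [a [b yE]] := binary_no_descent (andP ybin).2 no10.
have ystair : stair (0 :: y) by rewrite yE (stair_zeros_ones a b).
have ylast : last 0 (0 :: y) = 1.
  by have := allP ybin _ (mem_last 0 y); rewrite stair_asc //= in vle *; lia.
have v2E : v = 2 by move: vle; rewrite stair_asc // ylast; lia.
have [a' [[|b'] yE']] := stair_last1 ystair ylast; rewrite yE' v2E in n0112 *.
  by exists a', 0, 0; rewrite -cats1 -catA.
case/negP: n0112; apply/containsP; exists [:: 0; 1; 1; 2] => //.
rewrite -[[:: 0; 1; 1; 2]]/(rcons ([:: 0] ++ [:: 1; 1]) 2) rcons_subseq // cat_subseq //.
  by rewrite sub1seq mem_nseq.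
by rewrite -[nseq _ 1]/([:: 1; 1] ++ nseq b' 1) prefix_subseq.
Qed.

Lemma ramp_rcons_avoid2 a k b v : v <= k.+3 ->
  avoids_all P2 (rcons (ramp a k b) v) ->
  exists a' k' b', rcons (ramp a k b) v = ramp a' k' b'.
Proof.
rewrite avoids_all4 => vle /and4P[_ n0112 n0120 n0121].
have rstair := stair_ramp a k b; have rlast := last_ramp a k b.
case: (ltngtP v k.+2) => [vlt|vgt|->].
- rewrite -rlast in vlt.
  by have [_] := stair_rcons_drop rstair vlt n0120 n0121; rewrite rlast.
- have {vle vgt}vE : v = k.+3 by apply/eqP; rewrite eqn_leq vle vgt.
  subst v; case: b {n0120 n0121 rstair rlast} n0112 => [|b] n0112.
    by exists a, k.+1, 0; rewrite /ramp !cats0 rcons_cat (iotaSr 1 k.+2).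
  case/negP: n0112.
  apply: (@contains_nth_map [:: 0; k.+2; k.+3] [:: 0; 1; 1; 2]) => //.
    by rewrite /= ltnSn.
  rewrite [map _ _]/=.
  rewrite -[[:: 0; k.+2; k.+2; k.+3]]/(rcons ([:: 0] ++ [:: k.+2] ++ [:: k.+2]) k.+3).
  apply/rcons_subseq/cat_subseq; last apply: cat_subseq.
  + by rewrite sub1seq mem_nseq.
  + by rewrite sub1seq mem_iota add1n ltnSn.
  + by rewrite sub1seq mem_nseq eqxx.
by exists a, k, b.+1; rewrite /ramp !rcons_cat rcons_nseq.
Qed.

Lemma ascent_avoids2P x : x != [::] ->
  is_ascent_seq x && avoids_all P2 x <-> binary0 x \/ exists a k b, x = ramp a k b.
Proof.
move=> x0; split => [/andP[]|[xbin|[a [k [b ->]]]]]; last first.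
- by rewrite stair_ascent ?stair_ramp ?ramp_avoids2.
- by rewrite binary0_ascent ?binary0_avoids2.
elim/last_ind: x x0 => [|y v IH] // _.
have [->|y0] := eqVneq y [::]; first by rewrite ascent_seq1 => /eqP-> _; left.
rewrite ascent_seq_rcons // => /andP[yasc vle] vavoid.
case: (IH y0 yasc (avoids_all_rcons vavoid)) => [ybin|[a [k [b yE]]]].
  exact: binary0_rcons_avoid2.
rewrite yE stair_asc ?stair_ramp // last_ramp in vle vavoid *; right.
exact: ramp_rcons_avoid2.
Qed.

Lemma aP_P2 n : 0 < n -> aP P2 n = 2 ^ n.-1 + 'C(n.-1, 2).
Proof.
move=> npos; rewrite -(size_binaries n).
exact: aP_split npos (uniq_binaries n) (fun x => mem_binaries x npos) size_ramp
  ramp_inj ramp_not_binary0 ascent_avoids2P.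
Qed.

Theorem theorem5p2 (n : nat) : 1 <= n ->
  aP [:: [:: 0; 1; 0; 1]; [:: 0; 1; 0; 2]; [:: 0; 1; 2; 0]; [:: 0; 1; 2; 1]] n
    = 2 ^ n.-1 + 'C(n.-1, 2)
  /\ aP [:: [:: 0; 1; 0; 2]; [:: 0; 1; 1; 2]; [:: 0; 1; 2; 0]; [:: 0; 1; 2; 1]] n
    = 2 ^ n.-1 + 'C(n.-1, 2).
Proof. by move=> npos; split; [apply: aP_P1 | apply: aP_P2]. Qed.
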